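(* For every smooth $A[G]$-module $V$ and every $1\le r\le\infty$, the canonical map $\mathcal{F}_r(V)\to\mathcal{L}_r(V)$ (inclusion into $V^{U_1(\varpi^r)}$ followed by localization at $\mathfrak n$) is injective.
   Context: Setting: $F/\mathbb{Q}_p$ finite (integers $\mathcal{O}_F$, uniformizer $\varpi$, residue field $k_F$), $K/\mathbb{Q}_\ell$ finite with $\ell\ne p$ (integers $\mathcal{O}$, maximal ideal $\lambda$), $G=\mathrm{GL}_n(F)$ with $\ell\nmid\#\mathrm{GL}_n(k_F)$, $A$ an $\mathcal{O}$-algebra. $U_1(\varpi^r)$ is the mirahoric subgroup (elements of $\mathrm{GL}_n(\mathcal{O}_F)$ with last row $\equiv(0,\dots,0,1)\bmod\varpi^r$; for $r=\infty$, the mirabolic subgroup $P(\mathcal{O}_F)$). The commuting operators $U^{(j)}=[U_1(\varpi^r)\mathrm{diag}(\varpi1_j,1_{n-j})U_1(\varpi^r)]$, $1\le j\le n-1$, make $V^{U_1(\varpi^r)}$ an $\mathcal{O}[X_1,\dots,X_{n-1}]$-module ($X_j\mapsto U^{(j)}$). $\mathfrak n=(\lambda,X_1,\dots,X_{n-1})$, $\mathcal{L}_r(V)=(V^{U_1(\varpi^r)})_{\mathfrak n}$, and $\mathcal{F}_r(V)=\{x\in V^{U_1(\varpi^r)}:U^{(1)}x=\dots=U^{(n-1)}x=0\}$. *)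

From HB Require Import structures.
From mathcomp Require Import all_boot all_order all_algebra.
From mathcomp Require Import mpoly.
From Stdlib Require Import ClassicalEpsilon.

Set Implicit Arguments.
Unset Strict Implicit.
Unset Printing Implicit Defensive.

Import Order.TTheory GRing.Theory Num.Theory.
Local Open Scope ring_scope.

(* [vge v x k] means "v(x) >= k" with the convention v(0) = +oo.        *)
Definition vge (F : fieldType) (v : F -> int) (x : F) (k : int) : bool :=
  (x == 0) || (k <= v x).

(* A finite extension of Q_p with residue field of cardinality q:      *)
Record padic_field (p q : nat) (F : fieldType) := PadicField {
  pval : F -> int;
  pval_mul : forall x y : F, x != 0 -> y != 0 -> pval (x * y) = pval x + pval y;
  pval_add : forall (x y : F) (k : int),
      vge pval x k -> vge pval y k -> vge pval (x + y) k;
  pval_unif : exists w : F, w != 0 /\ pval w = 1;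
  pf_prime : prime p;
  pf_char0 : forall m : nat, (0 < m)%N -> (m%:R : F) != 0;
  pval_p : vge pval (p%:R : F) 1;
  pf_residue : exists s : seq F,
      [/\ size s = q,
          all (fun x => vge pval x 0) s,
          (forall i j : nat, (i < q)%N -> (j < q)%N ->
              vge pval (s`_i - s`_j) 1 -> i = j) &
          (forall x : F, vge pval x 0 ->
              exists2 y, y \in s & vge pval (x - y) 1)];
  pf_complete : forall u : nat -> F,
      (forall k : int, exists N : nat, forall m1 m2 : nat,
          (N <= m1)%N -> (N <= m2)%N -> vge pval (u m1 - u m2) k) ->
      exists l : F, forall k : int, exists N : nat, forall m : nat,
          (N <= m)%N -> vge pval (u m - l) k
}.

(* O is (a copy of) the ring of integers of K, via an injective ring   *)
(* morphism iota : O -> K with image {x | v(x) >= 0}.                   *)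
Definition ring_of_integers (l qK : nat) (K : fieldType)
    (PK : padic_field l qK K) (O : comNzRingType) (iota : {rmorphism O -> K}) :=
  injective iota /\ (forall x : K, vge (pval PK) x 0 <-> exists o, iota o = x).

Definition in_lambda (l qK : nat) (K : fieldType) (PK : padic_field l qK K)
    (O : comNzRingType) (iota : {rmorphism O -> K}) (o : O) : bool :=
  vge (pval PK) (iota o) 1.

(* Subgroups of G = GL_N(F), N = n.+1.                                  *)
Section Groups.
Variables (p q : nat) (F : fieldType) (PF : padic_field p q F) (n : nat).
Local Notation v := (pval PF).
Local Notation M := ('M[F]_n.+1).

Definition in_GLO (g : M) : Prop :=
  (forall i j, vge v (g i j) 0) /\ (\det g != 0 /\ v (\det g) = 0).

Definition cong_sub (m : nat) (g : M) : Prop :=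
  in_GLO g /\ forall i j, vge v (g i j - (i == j)%:R) m%:Z.

(* mirahoric U_1(varpi^r); r = None stands for r = infinity, where     *)
(* U_1(varpi^oo) is the mirabolic P(O_F) (last row exactly (0,..,0,1)). *)
Definition mirahoric (r : option nat) (g : M) : Prop :=
  in_GLO g /\ forall j : 'I_n.+1,
    match r with
    | Some k => vge v (g ord_max j - (j == ord_max)%:R) k%:Z
    | None => g ord_max j == (j == ord_max)%:R
    end.

Definition diag_unif (w : F) (j : nat) : M :=
  \matrix_(a, b) (if a == b then (if (a < j)%N then w else 1) else 0).
End Groups.

Definition smooth_rep (p q : nat) (F : fieldType) (PF : padic_field p q F)
    (n : nat) (A : pzRingType) (V : lmodType A) (rho : 'M[F]_n.+1 -> V -> V) :=
  [/\ (forall g, g \in unitmx -> forall x y, rho g (x + y) = rho g x + rho g y),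
      (forall g, g \in unitmx -> forall (a : A) x, rho g (a *: x) = a *: rho g x),
      (forall x, rho 1%:M x = x),
      (forall g h, g \in unitmx -> h \in unitmx ->
          forall x, rho (g *m h) x = rho g (rho h x)) &
      (* smoothness: the stabilizer of every vector is open, i.e. contains *)
      (* some principal congruence subgroup *)
      (forall x, exists m : nat, (0 < m)%N /\
          forall g, cong_sub PF m g -> rho g x = x)].

Section Hecke.
Variables (F : fieldType) (n : nat) (A : pzRingType) (V : lmodType A).
Variable rho : 'M[F]_n.+1 -> V -> V.
Variable U : 'M[F]_n.+1 -> Prop.

Definition fixed_by (x : V) : Prop := forall g, U g -> rho g x = x.

Definition dcoset (g h : 'M[F]_n.+1) : Prop :=
  exists u1 u2, [/\ U u1, U u2 & h = u1 *m g *m u2].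

(* s is a (duplicate-free) system of representatives of U g U / U *)
Definition is_coset_reps (g : 'M[F]_n.+1) (s : seq 'M[F]_n.+1) : Prop :=
  [/\ (forall h, h \in s -> dcoset g h),
      (forall h, dcoset g h -> exists2 h', h' \in s & U (invmx h' *m h)) &
      (forall i j, (i < size s)%N -> (j < size s)%N ->
         U (invmx s`_i *m s`_j) -> i = j)].

Definition hecke (g : 'M[F]_n.+1) (x : V) : V :=
  \sum_(h <- epsilon (inhabits [::]) (is_coset_reps g)) rho h x.
End Hecke.

(* The O[X_1..X_{N-1}]-module structure on V^U (X_j |-> U^(j)), the    *)
(* ideal n = (lambda, X_1, ..., X_{N-1}) and localization.  Variables   *)
(* of {mpoly O[n]} are indexed by i : 'I_n, 'X_i standing for X_{i+1}. *)
Section Module.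
Variables (O : comNzRingType) (A : algType O) (V : lmodType A) (n : nat).
Variable T : 'I_n -> V -> V.   (* T i = U^(i+1) *)

Definition mono_act (m : 'X_{1..n}) (x : V) : V :=
  foldr (fun i y => iter (m i) (T i) y) x (enum 'I_n).

Definition poly_act (P : {mpoly O[n]}) (x : V) : V :=
  \sum_(m <- msupp P) ((P@_m)%:A : A) *: mono_act m x.

Variable lam : O -> bool.

Definition in_max_ideal (P : {mpoly O[n]}) : Prop :=
  exists (ls : seq (O * {mpoly O[n]})) (qs : 'I_n -> {mpoly O[n]}),
    all (fun c => lam c.1) ls /\
    P = \sum_(c <- ls) c.1 *: c.2 + \sum_(i < n) 'X_i * qs i.

(* equality in the localization S^{-1} M, S = O[X] \ n:                *)
(* x/s = y/t  iff  exists u in S, u (t x - s y) = 0                     *)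
Definition loc_eq (xs yt : V * {mpoly O[n]}) : Prop :=
  exists u : {mpoly O[n]}, ~ in_max_ideal u /\
    poly_act u (poly_act yt.2 xs.1 - poly_act xs.2 yt.1) = 0.
End Module.

(* Vectors of F_r are killed by every U^(j), so a polynomial P acts on them through its
   constant term P(0).  If x/1 = y/1 in the localization at n, some P outside n kills x - y;
   then P(0) (x - y) = 0 with P(0) outside lambda, i.e. a unit of O, so x = y.
   The one non-formal input is that U^(j) is additive, which needs U g U to be a finite union
   of cosets u U: elements of U congruent modulo varpi have g-translates in the same coset,
   and there are finitely many residues modulo varpi. *)

From HB Require Import structures.
From mathcomp Require Import all_boot all_order all_algebra.
From mathcomp Require Import mpoly.
From mathcomp Require Import zify.
From Stdlib Require Import Classical ClassicalEpsilon.

Set Implicit Arguments.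
Unset Strict Implicit.
Unset Printing Implicit Defensive.

Import Order.TTheory GRing.Theory Num.Theory.
Local Open Scope ring_scope.

Section Valuation.
Variables (p q : nat) (F : fieldType) (PF : padic_field p q F).
Local Notation v := (pval PF).
Local Notation vge := (vge v).

Lemma pval1 : v 1 = 0.
Proof.
have := pval_mul PF (oner_neq0 F) (oner_neq0 F).
by rewrite mul1r => h; apply: (@addrI _ (v 1)); rewrite addr0 -h.
Qed.

Lemma pvalV (x : F) : x != 0 -> v x^-1 = - v x.
Proof.
move=> x0; have := pval_mul PF (invr_neq0 x0) x0; rewrite mulVf // pval1 => h.
lia.
Qed.

Lemma pvalN1 : v (-1) = 0.
Proof.
have N1 : (-1 : F) != 0 by rewrite oppr_eq0 oner_neq0.
have := pval_mul PF N1 N1; rewrite mulrNN mulr1 pval1 => h; lia.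
Qed.

Lemma vge0 k : vge 0 k. Proof. by rewrite /vge eqxx. Qed.

Lemma vge_unit (x : F) : x != 0 -> v x = 0 -> vge x 0.
Proof. by move=> _ vx; rewrite /vge vx lexx orbT. Qed.

Lemma vge1 : vge 1 0.
Proof. exact: vge_unit (oner_neq0 F) pval1. Qed.

Lemma vge_le (x : F) (k k' : int) : k' <= k -> vge x k -> vge x k'.
Proof. by rewrite /vge => kk' /orP [->|xk] //; rewrite (le_trans kk' xk) orbT. Qed.

Lemma vgeM (x y : F) a b : vge x a -> vge y b -> vge (x * y) (a + b).
Proof.
have [->|x0] := eqVneq x 0; first by rewrite mul0r => _ _; apply: vge0.
have [->|y0] := eqVneq y 0; first by rewrite mulr0 => _ _; apply: vge0.
rewrite /vge (negbTE x0) (negbTE y0) mulf_eq0 (negbTE x0) (negbTE y0) /=.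
by rewrite (pval_mul PF x0 y0); apply: lerD.
Qed.

Lemma vgeMr (x y : F) a : vge x a -> vge y 0 -> vge (x * y) a.
Proof. by move=> xa y0; have := vgeM xa y0; rewrite addr0. Qed.

Lemma vgeN (x : F) k : vge x k -> vge (- x) k.
Proof.
have vN1 : vge (-1) 0 by apply: vge_unit; rewrite ?oppr_eq0 ?oner_neq0 ?pvalN1.
by move=> xk; rewrite -mulN1r -[k]add0r; apply: vgeM.
Qed.

Lemma vgeB (x y : F) k : vge x k -> vge y k -> vge (x - y) k.
Proof. by move=> xk yk; apply: pval_add xk (vgeN yk). Qed.

Lemma vge_sign (b : nat) : vge ((-1) ^+ b) 0.
Proof. by rewrite -signr_odd; case: odd; rewrite ?expr1 ?expr0 ?vgeN ?vge1. Qed.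

Lemma vge_sum (I : Type) (r : seq I) (P : pred I) (G : I -> F) k :
  (forall i, P i -> vge (G i) k) -> vge (\sum_(i <- r | P i) G i) k.
Proof.
by move=> Gk; apply: (big_ind (vge^~ k)) => //; [apply: vge0 | move=> *; apply: pval_add].
Qed.

Lemma vge_prod (I : Type) (r : seq I) (P : pred I) (G : I -> F) :
  (forall i, P i -> vge (G i) 0) -> vge (\prod_(i <- r | P i) G i) 0.
Proof.
by move=> G0; apply: (big_ind (vge^~ 0)) => //; [apply: vge1 | move=> *; apply: vgeMr].
Qed.

Lemma vge_eq0 (x : F) : (forall k, vge x k) -> x = 0.
Proof. by move/(_ (v x + 1)); rewrite /vge gerDl ler10 orbF => /eqP. Qed.

End Valuation.

Lemma invmxM (F : fieldType) (m : nat) (A B : 'M[F]_m) :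
  A \in unitmx -> B \in unitmx -> invmx (A *m B) = invmx B *m invmx A.
Proof.
move=> Au Bu; have ABu : A *m B \in unitmx by rewrite unitmx_mul Au Bu.
have ABV : A *m B *m (invmx B *m invmx A) = 1%:M.
  by rewrite mulmxA -(mulmxA A) mulmxV // mulmx1 mulmxV.
by rewrite -[LHS]mulmx1 -ABV mulmxA mulVmx // mul1mx.
Qed.

Section IntegralMatrices.
Variables (p q : nat) (F : fieldType) (PF : padic_field p q F).
Local Notation v := (pval PF).
Local Notation vge := (vge v).

Definition integral_mx (m : nat) (A : 'M[F]_m) := forall i j, vge (A i j) 0.

Lemma integral_mxM m (A B : 'M[F]_m) :
  integral_mx A -> integral_mx B -> integral_mx (A *m B).
Proof. by move=> Ai Bi i j; rewrite mxE; apply: vge_sum => k _; apply: vgeMr. Qed.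

Lemma integral_det m (A : 'M[F]_m) : integral_mx A -> vge (\det A) 0.
Proof.
move=> Ai; apply: vge_sum => s _; apply: vgeMr; first exact: vge_sign.
by apply: vge_prod => i _.
Qed.

Lemma integral_adj m (A : 'M[F]_m) : integral_mx A -> integral_mx (\adj A).
Proof.
move=> Ai i j; rewrite mxE; apply: vgeMr; first exact: vge_sign.
by apply: integral_det => a b; rewrite !mxE.
Qed.

Variable n : nat.
Local Notation M := 'M[F]_n.+1.

Lemma GLO_unitmx (u : M) : in_GLO PF u -> u \in unitmx.
Proof. by case=> _ [d0 _]; rewrite unitmxE unitfE. Qed.

Lemma GLO_integral_inv (u : M) : in_GLO PF u -> integral_mx (invmx u).
Proof.
move=> uG i j; rewrite /invmx GLO_unitmx // mxE.
case: uG => ui [d0 vd]; apply: vgeMr; last exact: integral_adj.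
by apply: vge_unit; rewrite ?invr_eq0 // pvalV // vd oppr0.
Qed.

Lemma GLO1 : in_GLO PF (1%:M : M).
Proof.
split; last by rewrite det1 oner_neq0 pval1.
by move=> i j; rewrite mxE; case: eqP => _; [apply: vge1 | apply: vge0].
Qed.

Lemma GLOM (u u' : M) : in_GLO PF u -> in_GLO PF u' -> in_GLO PF (u *m u').
Proof.
case=> ui [d0 vd] [u'i [d'0 vd']]; split; first exact: integral_mxM.
by rewrite det_mulmx mulf_neq0 // pval_mul // vd vd' addr0.
Qed.

Lemma GLOV (u : M) : in_GLO PF u -> in_GLO PF (invmx u).
Proof.
move=> uG; split; first exact: GLO_integral_inv.
by case: uG => _ [d0 vd]; rewrite det_inv invr_eq0 d0 pvalV // vd oppr0.
Qed.

End IntegralMatrices.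

Section Mirahoric.
Variables (p q : nat) (F : fieldType) (PF : padic_field p q F) (n : nat).
Variable r : option nat.
Local Notation v := (pval PF).
Local Notation vge := (vge v).
Local Notation M := 'M[F]_n.+1.
Local Notation U := (mirahoric PF r).

Definition last_row_defect (A : M) (j : 'I_n.+1) : F :=
  A ord_max j - (j == ord_max)%:R.

Lemma last_row_defectM (A B : M) j :
  last_row_defect (A *m B) j =
  \sum_k last_row_defect A k * B k j + last_row_defect B j.
Proof.
have pick_last : \sum_k (k == ord_max)%:R * B k j = B ord_max j.
  rewrite (bigD1 ord_max) //= eqxx mul1r big1 ?addr0 // => k /negbTE ->.
  by rewrite mul0r.
rewrite /last_row_defect mxE addrA; congr (_ - _).
by under [X in _ = X + _]eq_bigr do rewrite mulrBl; rewrite sumrB pick_last subrK.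
Qed.

(* [r = None] imposes the congruence modulo every power of [varpi], i.e. an exact last row. *)
Definition below_level (k0 : int) : bool :=
  if r is Some k then k0 <= k%:Z else true.

Lemma mirahoricP (u : M) : U u <->
  in_GLO PF u /\ forall j k0, below_level k0 -> vge (last_row_defect u j) k0.
Proof.
rewrite /mirahoric /last_row_defect /below_level.
split; case=> uG ur; split=> // j; move: (ur j); case: r => [k|] /=.
- by move=> ujk k0 k0k; apply: vge_le k0k ujk.
- by move/eqP=> -> k0 _; rewrite subrr vge0.
- by apply; rewrite lexx.
- by move=> ujk; rewrite -subr_eq0; apply/eqP/vge_eq0 => k0; apply: ujk.
Qed.

Lemma mirahoric1 : U (1%:M : M).
Proof.
apply/mirahoricP; split=> [|j k0 _]; first exact: GLO1.
by rewrite /last_row_defect mxE eq_sym subrr vge0.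
Qed.

Lemma mirahoricM (u u' : M) : U u -> U u' -> U (u *m u').
Proof.
move=> /mirahoricP [uG ur] /mirahoricP [u'G u'r]; apply/mirahoricP.
split=> [|j k0 k0r]; first exact: GLOM.
rewrite last_row_defectM; apply: pval_add (u'r _ _ k0r).
by apply: vge_sum => i _; apply: vgeMr (ur _ _ k0r) _; case: u'G.
Qed.

Lemma mirahoricV (u : M) : U u -> U (invmx u).
Proof.
move=> /mirahoricP [uG ur]; apply/mirahoricP; split=> [|j k0 k0r]; first exact: GLOV.
have := last_row_defectM u (invmx u) j.
rewrite mulmxV ?(GLO_unitmx uG) // /last_row_defect mxE eq_sym subrr.
move/eqP; rewrite eq_sym addrC addr_eq0 => /eqP ->.
by apply/vgeN/vge_sum => i _; apply: vgeMr (ur _ _ k0r) (GLO_integral_inv uG _ _).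
Qed.

Lemma mirahoric_unitmx (u : M) : U u -> u \in unitmx.
Proof. by case/mirahoricP=> /GLO_unitmx. Qed.

End Mirahoric.

Section DoubleCosets.
Variables (F : fieldType) (n : nat).
Local Notation M := 'M[F]_n.+1.
Variable U : M -> Prop.
Hypotheses (U1 : U 1%:M) (UM : forall u u', U u -> U u' -> U (u *m u')).
Hypotheses (UV : forall u, U u -> U (invmx u)) (U_unit : forall u, U u -> u \in unitmx).
Variables (g : M) (g_unit : g \in unitmx).

Lemma dcoset_unitmx h : dcoset U g h -> h \in unitmx.
Proof.
by case=> [u1 [u2 [/U_unit u1u /U_unit u2u ->]]]; rewrite !unitmx_mul u1u g_unit.
Qed.

Lemma same_coset_sym a b : a \in unitmx -> b \in unitmx ->
  U (invmx a *m b) -> U (invmx b *m a).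
Proof. by move=> au bu /UV; rewrite invmxM ?unitmx_inv // invmxK. Qed.

Lemma same_coset_trans a b c : b \in unitmx ->
  U (invmx a *m b) -> U (invmx b *m c) -> U (invmx a *m c).
Proof. by move=> bu ab bc; have := UM ab bc; rewrite mulmxA mulmxK. Qed.

Lemma uniq_coset_reps_sub (t : seq M) : (forall h, h \in t -> dcoset U g h) ->
  exists s : seq M, [/\ (forall h, h \in s -> dcoset U g h),
    (forall h, h \in t -> exists2 h', h' \in s & U (invmx h' *m h)) &
    (forall i k, (i < size s)%N -> (k < size s)%N ->
        U (invmx s`_i *m s`_k) -> i = k)].
Proof.
elim: t => [|a t IHt] at_dc; first by exists [::]; split.
have t_dc h : h \in t -> dcoset U g h by move=> ht; apply: at_dc; rewrite inE ht orbT.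
have [s [s_dc t_s s_uniq]] := IHt t_dc.
have a_dc : dcoset U g a by apply: at_dc; rewrite mem_head.
have [[h' h's ah'] | a_new] := classic (exists2 h', h' \in s & U (invmx h' *m a)).
  exists s; split=> // h; rewrite inE => /predU1P [->|]; [by exists h' | exact: t_s].
have s_unit i : (i < size s)%N -> s`_i \in unitmx.
  by move=> ?; apply/dcoset_unitmx/s_dc/mem_nth.
exists (a :: s); split.
- by move=> h; rewrite inE => /predU1P [->|/s_dc].
- move=> h; rewrite inE => /predU1P [->|/t_s [h' h's hh']].
    by exists a; rewrite ?mem_head // mulVmx ?(dcoset_unitmx a_dc).
  by exists h'; rewrite ?inE ?h's ?orbT.
- move=> [|i] [|k] //= ilt klt si_sk.
  + case: a_new; exists s`_k; first exact: mem_nth.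
    by apply: same_coset_sym si_sk; [apply: dcoset_unitmx | apply: s_unit].
  + by case: a_new; exists s`_i; rewrite ?mem_nth.
  + by congr S; apply: s_uniq.
Qed.

Lemma coset_reps_of_cover (t : seq M) : (forall h, h \in t -> dcoset U g h) ->
  (forall u, U u -> exists2 h, h \in t & U (invmx h *m (u *m g))) ->
  exists s, is_coset_reps U g s.
Proof.
move=> t_dc t_cover; have [s [s_dc t_s s_uniq]] := uniq_coset_reps_sub t_dc.
exists s; split=> // _ [u1 [u2 [u1U u2U ->]]].
have [h ht hu1] := t_cover u1 u1U; have [h' h's h'h] := t_s h ht.
exists h' => //; apply: same_coset_trans (dcoset_unitmx (t_dc h ht)) h'h _.
by rewrite mulmxA; apply: UM.
Qed.

Variables (A : pzRingType) (V : lmodType A) (rho : M -> V -> V).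
Hypothesis rhoD : forall h, h \in unitmx -> forall x y, rho h (x + y) = rho h x + rho h y.

Lemma hecke_sub : (exists s, is_coset_reps U g s) ->
  forall x y, hecke rho U g (x - y) = hecke rho U g x - hecke rho U g y.
Proof.
move=> reps x y; rewrite /hecke -sumrB; apply: eq_big_seq => h hs.
have [h_dc _ _] := epsilon_spec (inhabits [::]) _ reps.
have hu := dcoset_unitmx (h_dc h hs).
by apply/eqP; rewrite eq_sym subr_eq -rhoD // subrK.
Qed.

End DoubleCosets.

Section DiagonalConjugation.
Variables (p q : nat) (F : fieldType) (PF : padic_field p q F) (n : nat).
Variable r : option nat.
Local Notation v := (pval PF).
Local Notation vge := (vge v).
Local Notation M := 'M[F]_n.+1.
Local Notation U := (mirahoric PF r).
Variables (w : F) (j : nat).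
Hypotheses (w0 : w != 0) (vw : v w = 1) (jn : (j <= n)%N).
Local Notation g := (diag_unif n w j).

Lemma diag_unif_mull (x : F) (B : M) a b :
  (diag_unif n x j *m B) a b = (if (a < j)%N then x else 1) * B a b.
Proof.
rewrite mxE (bigD1 a) //= big1 ?addr0; first by rewrite mxE eqxx.
by move=> c ca; rewrite mxE eq_sym (negbTE ca) mul0r.
Qed.

Lemma diag_unif_mulr (x : F) (B : M) a b :
  (B *m diag_unif n x j) a b = B a b * (if (b < j)%N then x else 1).
Proof.
rewrite mxE (bigD1 b) //= big1 ?addr0; first by rewrite mxE eqxx.
by move=> c cb; rewrite mxE (negbTE cb) mulr0.
Qed.

Lemma diag_unif_mulV : diag_unif n w^-1 j *m g = 1%:M.
Proof.
apply/matrixP => a b; rewrite diag_unif_mull !mxE.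
by case: eqP => [->|_]; rewrite ?mulr0 //; case: ifP; rewrite ?mulVf ?mulr1.
Qed.

Lemma diag_unif_unitmx : g \in unitmx.
Proof. by case: (mulmx1_unit diag_unif_mulV). Qed.

Lemma diag_unif_invmx : invmx g = diag_unif n w^-1 j.
Proof.
by rewrite -[LHS]mul1mx -diag_unif_mulV mulmxK ?diag_unif_unitmx.
Qed.

Lemma diag_unif_conjE (k : M) a b : (invmx g *m k *m g) a b =
  (if (a < j)%N then w^-1 else 1) * k a b * (if (b < j)%N then w else 1).
Proof. by rewrite diag_unif_invmx diag_unif_mulr diag_unif_mull. Qed.

(* Conjugation by [g] divides the first [j] rows by [varpi] and multiplies the first [j]
   columns by it, so off-diagonal entries in [varpi O_F] stay integral, and the last row is
   only multiplied since [j <= n]. *)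
Lemma mirahoric_diag_conj (k : M) : U k ->
  (forall a b, a != b -> vge (k a b) 1) -> U (invmx g *m k *m g).
Proof.
case/mirahoricP=> [[k_int [dk0 vdk]] k_last] k_offdiag.
have vge_w (b : 'I_n.+1) : vge (if (b < j)%N then w else 1) 0.
  by case: ifP => _; [rewrite /vge vw ler01 orbT | apply: vge1].
have last_nlt : (@ord_max n < j)%N = false by apply/negbTE; rewrite -leqNgt.
apply/mirahoricP; split; first split.
- move=> a b; rewrite diag_unif_conjE; have [<-|ab] := eqVneq a b.
    case: ifP => _; last by rewrite mul1r mulr1.
    by rewrite mulrAC mulVf ?mul1r.
  apply: vgeMr (vge_w b); rewrite -[0](addNr 1); apply: vgeM (k_offdiag _ _ ab).
  case: ifP => _; last by apply: vge_le _ (vge1 PF).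
  by rewrite /vge invr_eq0 (negbTE w0) pvalV // vw.
- rewrite !det_mulmx diag_unif_invmx mulrAC -det_mulmx diag_unif_mulV det1 mul1r.
  by split.
- move=> b k0 k0r; rewrite /last_row_defect diag_unif_conjE last_nlt mul1r.
  have := k_last b k0 k0r; rewrite /last_row_defect.
  have [->|bmax] := eqVneq b ord_max; first by rewrite last_nlt mulr1.
  by rewrite !subr0 => /vgeMr; apply.
Qed.

Lemma mirahoric_diag_congr (u0 u : M) : U u0 -> U u ->
  (forall a b, vge (u a b - u0 a b) 1) -> U (invmx (u0 *m g) *m (u *m g)).
Proof.
move=> u0U uU uu0; have u0u := mirahoric_unitmx u0U.
rewrite invmxM ?diag_unif_unitmx // mulmxA -(mulmxA _ _ u).
apply: mirahoric_diag_conj => [|a b ab]; first by apply: mirahoricM uU; apply: mirahoricV.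
have -> : (invmx u0 *m u) a b = (invmx u0 *m (u - u0)) a b.
  by rewrite mulmxBr mulVmx // !mxE (negbTE ab) subr0.
rewrite mxE; apply: vge_sum => c _.
have -> : (u - u0) c b = u c b - u0 c b by rewrite !mxE.
rewrite mulrC.
by apply: vgeMr (uu0 c b) _; case/mirahoricP: u0U => /GLO_integral_inv.
Qed.

(* One element of [U] per pattern of residues modulo [varpi] realised in [U] suffices, by
   [mirahoric_diag_congr]; there are finitely many patterns. *)
Lemma mirahoric_diag_cover : exists t : seq M,
  (forall h, h \in t -> dcoset U g h) /\
  (forall u, U u -> exists2 h, h \in t & U (invmx h *m (u *m g))).
Proof.
have [s [_ _ _ s_residues]] := pf_residue PF.
pose pattern := {ffun 'I_n.+1 * 'I_n.+1 -> 'I_(size s)}.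
pose approx (u : M) (f : pattern) := forall a b, vge (u a b - s`_(f (a, b))) 1.
have approx_pattern u : U u -> exists f, approx u f.
  case/mirahoricP=> [[u_int _] _].
  have : forall ab : 'I_n.+1 * 'I_n.+1,
      exists i : 'I_(size s), vge (u ab.1 ab.2 - s`_i) 1.
    move=> [a b]; have [y ys uy] := s_residues _ (u_int a b).
    have ys' : (index y s < size s)%N by rewrite index_mem.
    by exists (Ordinal ys'); rewrite /= nth_index.
  case/fin_all_exists => f uf.
  by exists [ffun ab => f ab] => a b; rewrite ffunE; apply: (uf (a, b)).
pose rep_spec (f : pattern) (u : M) :=
  U u /\ ((exists u', U u' /\ approx u' f) -> approx u f).
have rep_specP f : rep_spec f (epsilon (inhabits 1%:M) (rep_spec f)).
  apply: epsilon_spec.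
  have [[u' [u'U u'f]] | none] := classic (exists u', U u' /\ approx u' f).
    by exists u'.
  by exists 1%:M; split=> [|realised]; [apply: mirahoric1 | case: none].
pose rep f := epsilon (inhabits 1%:M) (rep_spec f).
exists [seq rep f *m g | f <- enum {: pattern}]; split.
  move=> _ /mapP [f _ ->]; exists (rep f), 1%:M.
  by split; [case: (rep_specP f) | apply: mirahoric1 | rewrite mulmx1].
move=> u uU; have [f uf] := approx_pattern u uU.
exists (rep f *m g); first by apply: map_f; rewrite mem_enum.
have [repU rep_approx] := rep_specP f.
apply: mirahoric_diag_congr => // a b.
have -> : u a b - rep f a b = (u a b - s`_(f (a, b))) - (rep f a b - s`_(f (a, b))).
  by rewrite opprB addrA subrK.
by apply: vgeB (uf a b) (rep_approx _ a b); exists u.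
Qed.

Lemma diag_unif_coset_reps : exists s, is_coset_reps U g s.
Proof.
have [t [t_dc t_cover]] := mirahoric_diag_cover.
apply: coset_reps_of_cover t_dc t_cover.
- exact: mirahoric1.
- exact: mirahoricM.
- exact: mirahoricV.
- exact: mirahoric_unitmx.
- exact: diag_unif_unitmx.
Qed.

End DiagonalConjugation.

Lemma mpoly_constant_decomp (O : comNzRingType) (n : nat) (P : {mpoly O[n]}) :
  exists Q : 'I_n -> {mpoly O[n]}, P = P@_0 *: 1 + \sum_(i < n) 'X_i * Q i.
Proof.
elim/mpolyind: P => [|c m P _ _ [Q PQ]].
  by exists (fun=> 0); rewrite mcoeff0 scale0r add0r big1 // => i _; rewrite mulr0.
have [->|m0] := eqVneq m 0%MM.
  exists Q; rewrite mcoeffD mcoeffZ mcoeffX eqxx mulr1 scalerDl mpolyX0.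
  by rewrite -addrA -PQ.
have [i mi] : exists i, m i != 0%N.
  apply/existsP; apply: contraR m0 => /existsPn m_0; apply/eqP/mnmP => i.
  by rewrite mnm0E; apply/eqP; have := m_0 i; rewrite negbK.
have Xm : 'X_[m] = 'X_i * 'X_[m - U_(i)] :> {mpoly O[n]}.
  rewrite -mpolyXD; congr mpolyX; apply/mnmP => k.
  rewrite mnmDE mnmBE mnm1E; case: eqP => [<-|_] /=; last by rewrite subn0.
  by rewrite add1n subn1 prednK // lt0n.
exists (fun k => Q k + (if k == i then c *: 'X_[m - U_(i)] else 0)).
rewrite mcoeffD mcoeffZ mcoeffX (negbTE m0) mulr0 add0r.
have -> : \sum_(k < n) 'X_k * (Q k + (if k == i then c *: 'X_[m - U_(i)] else 0))
    = \sum_(k < n) 'X_k * Q k + c *: 'X_[m].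
  under eq_bigr do rewrite mulrDr; rewrite big_split /=; congr (_ + _).
  rewrite (bigD1 i) //= eqxx big1 ?addr0 => [|k /negbTE ->]; last by rewrite mulr0.
  by rewrite Xm scalerAr.
by rewrite {1}PQ addrC -addrA.
Qed.

Lemma mpoly_constant_notin_max_ideal (O : comNzRingType) (n : nat)
    (lam : O -> bool) (P : {mpoly O[n]}) :
  ~ in_max_ideal lam P -> ~~ lam P@_0.
Proof.
move=> Pn; apply/negP => P0; apply: Pn.
have [Q PQ] := mpoly_constant_decomp P.
by exists [:: (P@_0, 1)], Q; rewrite /= P0 big_seq1.
Qed.

Section PolyAction.
Variables (O : comNzRingType) (A : algType O) (V : lmodType A) (n : nat).
Variable T : 'I_n -> V -> V.

Lemma mono_act0 (x : V) : mono_act T 0%MM x = x.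
Proof. by rewrite /mono_act; elim: (enum 'I_n) => //= i l ->; rewrite mnm0E. Qed.

Lemma mono_act_killed (m : 'X_{1..n}) (z : V) :
  (forall i, T i z = 0) -> (forall i, T i 0 = 0) ->
  mono_act T m z = if m == 0%MM then z else 0.
Proof.
move=> Tz T0; have iterS_killed i k a : a \in [:: z; 0] -> iter k.+1 (T i) a = 0.
  move=> a_in; elim: k => [|k /= ->] //=.
  by move: a_in; rewrite !inE => /pred2P [] ->.
have mono_seq (l : seq 'I_n) : foldr (fun i y => iter (m i) (T i) y) z l =
    if all (fun i => m i == 0%N) l then z else 0.
  elim: l => [|i l /= ->] //; case: (m i) => [|k] //=.
  by rewrite -/(iter k.+1 (T i) _) iterS_killed //; case: all; rewrite !inE eqxx ?orbT.
rewrite /mono_act mono_seq; congr (if _ then _ else _); apply/allP/eqP => [m_0|-> i _].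
  by apply/mnmP => i; rewrite mnm0E; apply/eqP/m_0; rewrite mem_enum.
by rewrite mnm0E.
Qed.

Lemma poly_act1 (x : V) : poly_act T 1 x = x.
Proof. by rewrite /poly_act msupp1 big_seq1 mcoeff1 eqxx mono_act0 !scale1r. Qed.

Lemma poly_act_killed (P : {mpoly O[n]}) (z : V) :
  (forall i, T i z = 0) -> (forall i, T i 0 = 0) -> poly_act T P z = (P@_0)%:A *: z.
Proof.
move=> Tz T0; rewrite /poly_act.
under eq_bigr do rewrite mono_act_killed // (fun_if (GRing.scale _)) scaler0.
rewrite -big_mkcond /=; have [P0|P0] := boolP (0%MM \in msupp P).
  by rewrite -big_filter (filter_pred1_uniq (msupp_uniq P) P0) big_seq1.
rewrite big1_seq => [|m /andP [/eqP -> m0]]; last by rewrite m0 in P0.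
by rewrite memN_msupp_eq0 // scale0r scale0r.
Qed.

End PolyAction.

Lemma integer_unit (l qK : nat) (K : fieldType) (PK : padic_field l qK K)
    (O : comNzRingType) (iota : {rmorphism O -> K}) (c : O) :
  ring_of_integers PK iota -> ~~ in_lambda PK iota c -> exists d, d * c = 1.
Proof.
case=> iota_inj iota_int; rewrite /in_lambda /vge negb_or => /andP [c0 vc_lt1].
have vc0 : pval PK (iota c) = 0.
  have : vge (pval PK) (iota c) 0 by apply/iota_int; exists c.
  by rewrite /vge (negbTE c0) /= -ltNge in vc_lt1 * => vc_ge0; lia.
have [d dc] : exists d, iota d = (iota c)^-1.
  by apply/iota_int/vge_unit; rewrite ?invr_eq0 // pvalV // vc0 oppr0.
by exists d; apply: iota_inj; rewrite rmorphM rmorph1 dc mulVf.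
Qed.

Unset Implicit Arguments.

Theorem lemma4
    (p q l qK : nat) (F : fieldType) (PF : padic_field p q F)
    (K : fieldType) (PK : padic_field l qK K)
    (O : comNzRingType) (iota : {rmorphism O -> K})
    (hO : ring_of_integers PK iota)
    (hlp : l != p)
    (n : nat)
    (hGL : ~~ (l %| \prod_(i < n.+1) (q ^ n.+1 - q ^ i))%N)
    (w : F) (hw : w != 0 /\ pval PF w = 1)
    (A : algType O) (V : lmodType A) (rho : 'M[F]_n.+1 -> V -> V)
    (hrho : smooth_rep PF rho)
    (r : option nat) (hr : forall k, r = Some k -> (1 <= k)%N) :
  let U := mirahoric PF r in
  let T := fun i : 'I_n => hecke rho U (diag_unif n w i.+1) in
  let Fr := fun x : V => fixed_by rho U x /\ forall i, T i x = 0 in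
  forall x y : V, Fr x -> Fr y ->
    loc_eq T (in_lambda PK iota) (x, 1) (y, 1) -> x = y.
Proof.
move=> U T Fr x y [_ Tx] [_ Ty] [u [u_unit]].
rewrite /= !poly_act1; case: hrho => rhoD _ _ _ _; case: hw => w0 vw.
have TB i a b : T i (a - b) = T i a - T i b.
  apply: (hecke_sub _ _ rhoD (diag_unif_coset_reps r w0 vw (ltn_ord i))).
    exact: mirahoric_unitmx.
  exact: diag_unif_unitmx.
have T0 i : T i 0 = 0 by have := TB i 0 0; rewrite !subrr.
rewrite poly_act_killed => [ux_y|i|//]; last by rewrite TB Tx Ty subrr.
have [d du] := integer_unit hO (mpoly_constant_notin_max_ideal u_unit).
have dc : d%:A * (u@_0)%:A = 1 :> A by rewrite mulr_algl scalerA du scale1r.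
by apply/eqP; rewrite -subr_eq0 -[x - y]scale1r -dc -scalerA ux_y scaler0.
Qed.
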